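(* Let $G$ be a $c$-edge-colored multigraph (without loops) with $n$ vertices such that every vertex is incident to at least two edges of different colors. If $\delta_{dym}(x)\ge (n+1)/2$ for every $x\in V(G)$, and at least one vertex is incident to at least three edges of pairwise different colors, then $G$ has a properly colored hamiltonian cycle.
   Context: A $c$-edge-colored multigraph is a finite multigraph without loops (parallel edges allowed) together with a map $\phi:E(G)\to\{1,\ldots,c\}$. For $u,v\in V(G)$, $E_{uv}$ is the set of edges with end vertices $u$ and $v$. Here $\delta_{dym}(x)$ is the number of vertices $y$ such that $E_{xy}$ contains two edges of different colors. A properly colored (PC) hamiltonian cycle is a cyclic sequence $(x_1,f_1,x_2,f_2,\ldots,x_n,f_n,x_1)$ containing every vertex exactly once, with $f_i\in E_{x_ix_{i+1}}$ (indices mod $n$), such that any two consecutive edges, including $f_n$ and $f_1$, have different colors. *)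

From mathcomp Require Import all_boot.
Set Implicit Arguments. Unset Strict Implicit. Unset Printing Implicit Defensive.

(* A c-edge-colored loopless multigraph: vertex type V, edge type E (parallel
   edges allowed, as distinct elements of E), endpoints [ends e] a 2-element
   set of vertices, and colouring [phi : E -> 'I_c] (colours 1..c encoded as
   0..c-1). *)
Section Multigraph.
Variables (V E : finType) (c : nat) (ends : E -> {set V}) (phi : E -> 'I_c).

Definition loopless : Prop := forall e : E, #|ends e| = 2.

Definition E_between (u v : V) : {set E} := [set e | ends e == [set u; v]].

Definition delta_dym (x : V) : nat :=
  #|[set y : V | [exists e1 in E_between x y, exists e2 in E_between x y,
                   phi e1 != phi e2]]|.

Definition incident (x : V) (e : E) : bool := x \in ends e.

Definition two_colors_at (x : V) : Prop :=
  exists e1 e2, [/\ incident x e1, incident x e2 & phi e1 != phi e2].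

Definition three_colors_at (x : V) : Prop :=
  exists e1 e2 e3, [/\ incident x e1, incident x e2, incident x e3 &
    [&& phi e1 != phi e2, phi e1 != phi e3 & phi e2 != phi e3]].

(* PC hamiltonian cycle (x_1,f_1,...,x_n,f_n,x_1) with n = |V|: the x_i are
   all distinct (hence every vertex exactly once), f_i in E_{x_i x_{i+1}}
   (indices mod n), consecutive edges (including f_n, f_1) differently coloured. *)
Definition PC_hamiltonian_cycle : Prop :=
  exists (x : 'I_#|V| -> V) (f : 'I_#|V| -> E),
    [/\ injective x,
        forall i, f i \in E_between (x i) (x (ordS i)) &
        forall i, phi (f i) != phi (f (ordS i))].
End Multigraph.

From mathcomp Require Import all_boot zify.
Set Implicit Arguments. Unset Strict Implicit. Unset Printing Implicit Defensive.

(* Join x and y when E_xy contains two edges of different colours (the relation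
   [dym]).  The degree hypothesis gives this simple graph Ore's condition
   deg x + deg y >= n + 1 for non-adjacent x, y, so it is Hamiltonian-connected:
   a spanning sequence from u to v with a non-adjacent consecutive pair is
   improved by reversing a segment.  On a Hamiltonian cycle of this graph every
   step offers a set of at least two colours, and the cycle is coloured greedily
   as soon as, at some vertex, the sets of its two steps differ or coincide with
   at least three colours.  Otherwise every step offers the same two colours L0,
   and the vertex x with three colours has an edge e whose colour is not in L0.
   If some neighbour w of x offers a set other than L0, Ore's rotation applied to
   a Hamiltonian path through the chord xw yields a Hamiltonian cycle whose steps
   offer both sets; if not, a Hamiltonian path from x to the other end of e,
   closed by e, is coloured greedily. *)

Section Steps.
Variable T : eqType.
Implicit Types (x y : T) (s t : seq T) (p : T * T).

Definition steps x s : seq (T * T) := pairmap pair x s.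

Definition swap p : T * T := (p.2, p.1).

Lemma steps_cat x s1 s2 : steps x (s1 ++ s2) = steps x s1 ++ steps (last x s1) s2.
Proof. exact: pairmap_cat. Qed.

Lemma size_steps x s : size (steps x s) = size s.
Proof. exact: size_pairmap. Qed.

Lemma unzip1_steps x s : unzip1 (steps x s) = belast x s.
Proof. by elim: s x => //= y s IH x; rewrite IH. Qed.

Lemma unzip2_steps x s : unzip2 (steps x s) = s.
Proof. by elim: s x => //= y s IH x; rewrite IH. Qed.

Lemma path_steps (e : rel T) x s : path e x s = all (fun p => e p.1 p.2) (steps x s).
Proof. by elim: s x => //= y s IH x; rewrite IH. Qed.

Lemma last_rev_belast x s : last (last x s) (rev (belast x s)) = x.
Proof. by case: s => [|y s] //=; rewrite rev_cons last_rcons. Qed.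

Lemma rev_cons_last x s : rev (x :: s) = last x s :: rev (belast x s).
Proof. by rewrite lastI rev_rcons. Qed.

Lemma steps_rev x s :
  steps (last x s) (rev (belast x s)) = rev (map swap (steps x s)).
Proof.
elim: s x => [|y s IH] x //=.
by rewrite rev_cons -cats1 steps_cat IH rev_cons -cats1 last_rev_belast.
Qed.

Lemma mem_steps_cat x s1 y z s2 : last x s1 = y -> (y, z) \in steps x (s1 ++ z :: s2).
Proof. by move=> <-; rewrite steps_cat mem_cat mem_head orbT. Qed.

Lemma mem_stepsP x s p : p \in steps x s ->
  exists s1 s2, s = s1 ++ p.2 :: s2 /\ last x s1 = p.1.
Proof.
elim: s x => [|y s IH] x //=; rewrite in_cons => /orP [/eqP -> | /IH [s1 [s2 [-> <-]]]].
  by exists [::], s.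
by exists (y :: s1), s2.
Qed.

Lemma uniq_steps x s : uniq s -> uniq (steps x s).
Proof. by move=> Us; apply: (@map_uniq _ _ snd); rewrite [map _ _]unzip2_steps. Qed.

Lemma steps_neq x s p : uniq (x :: s) -> p \in steps x s -> p.1 != p.2.
Proof.
case: p => a b Us /mem_stepsP [s1 [s2 [Es /= Ea]]].
move: Us; rewrite Es -cat_cons cat_uniq /= => /and3P [_ /norP [Nb _] _].
by apply: contraNneq Nb => <-; rewrite -Ea mem_last.
Qed.

Lemma next_steps y t p :
  uniq (y :: t) -> p \in steps y (rcons t y) -> next (y :: t) p.1 = p.2.
Proof. by move/cycle_next; rewrite /= path_steps => /allP H /H /eqP. Qed.

Definition cycle_edge (W : seq T) p := (next W p.1 == p.2) || (next W p.2 == p.1).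

Lemma cycle_edge_rev_suffix x t Y p : uniq (x :: t ++ Y) -> p \in steps x (t ++ Y) ->
  (Y == [::]) || (p != (last x t, head x Y)) -> cycle_edge (x :: t ++ rev Y) p.
Proof.
set W := x :: t ++ rev Y => UY Hp HpY.
have UW : uniq W.
  by rewrite (perm_uniq (_ : perm_eq W (x :: t ++ Y))) // perm_cons perm_cat2l perm_rev.
have HW q : q \in steps x t ++ steps (last x t) (rev Y) -> next W q.1 = q.2.
  by move=> Hq; apply: next_steps => //; rewrite -cats1 steps_cat mem_cat steps_cat Hq.
move: Hp HpY; rewrite steps_cat mem_cat => /orP [Hp _|].
  by rewrite /cycle_edge HW ?mem_cat ?Hp ?eqxx.
case: Y {UY} W UW HW => [|y Y] //= W UW HW; rewrite in_cons => /orP [/eqP -> | Hp] /=.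
  by rewrite eqxx.
move=> _; apply/orP; right; apply/eqP; apply: (HW (swap p)).
rewrite mem_cat; apply/orP; right.
rewrite lastI rev_rcons /= in_cons steps_rev mem_rev.
by apply/orP; right; apply: map_f.
Qed.

Lemma next_head y t : next (y :: t) y = head y t.
Proof. by case: t => [|z t] /=; rewrite eqxx. Qed.

Lemma prev_head y t : y \notin t -> prev (y :: t) y = last y t.
Proof.
by move=> Nt; rewrite prev_nth mem_head memNindex //; have := nth_last y (y :: t).
Qed.

Lemma prev_invariant_const (R : eqType) (g : T -> R) W : uniq W ->
  {in W, forall a, g (prev W a) = g a} -> {in W &, forall a b, g a = g b}.
Proof.
move=> UW Hg.
have : cycle [rel a b | g a == g b] W.
  apply: cycle_from_next => // a Ha /=.
  by rewrite -[in g a](prev_next UW a) Hg ?mem_next.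
have Hp (r : seq T) y : path [rel a b | g a == g b] y r -> {in y :: r, forall a, g a = g y}.
  elim: r y => [|z r IH] y /=; first by move=> _ a; rewrite inE => /eqP ->.
  move=> /andP [/eqP Hyz /IH Hz] a; rewrite in_cons => /orP [/eqP -> //|Ha].
  by rewrite Hyz Hz // in_cons Ha orbT.
case: W UW Hg => [|y t] _ _ //= /Hp Hc a b Ha Hb.
by rewrite !Hc // -rcons_cons mem_rcons in_cons ?Ha ?Hb orbT.
Qed.

End Steps.

Section Spanning.
Variable V : finType.
Implicit Types (W s : seq V).

Definition spanning W := uniq W && (size W == #|V|).

Lemma mem_spanning W x : spanning W -> x \in W.
Proof.
case/andP=> UW /eqP SW; apply/negPn/negP => Nx.
have /card_uniqP : uniq (x :: W) by rewrite /= Nx.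
by move: (max_card (mem (x :: W))) => /[swap] -> /=; rewrite SW ltnn.
Qed.

Lemma count_spanning W (P : pred V) : spanning W -> count P W = #|[set y | P y]|.
Proof.
move=> HW; rewrite -size_filter.
have /card_uniqP <- : uniq (filter P W) by rewrite filter_uniq //; case/andP: HW.
by apply: eq_card => y; rewrite mem_filter inE mem_spanning // andbT.
Qed.

Lemma perm_spanning W1 W2 : perm_eq W1 W2 -> spanning W1 = spanning W2.
Proof. by move=> HW; rewrite /spanning (perm_uniq HW) (perm_size HW). Qed.

End Spanning.

Section HamiltonianConnected.
Variables (V : finType) (h : rel V).
Hypotheses (h_sym : symmetric h) (h_irr : irreflexive h).
Implicit Types (x : V) (s A B C : seq V).
Local Notation deg x := #|[set y | h x y]|.
Hypothesis ore : forall x y, x != y -> ~~ h x y -> #|V|.+1 <= deg x + deg y.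

Lemma count_crossings a b x s : spanning (x :: s) ->
  deg a + deg b + count [pred p | ~~ h a p.1 && ~~ h b p.2] (steps x s) =
  count [pred p | h a p.1 && h b p.2] (steps x s) + size s + h a (last x s) + h b x.
Proof.
move=> Hs; set l := steps x s.
pose Q1 := [pred p : V * V | h a p.1]; pose Q2 := [pred p : V * V | h b p.2].
have Ha : deg a = count Q1 l + h a (last x s).
  rewrite -(count_spanning _ Hs) lastI -cats1 count_cat /= addn0.
  by rewrite -(unzip1_steps x s) count_map.
have Hb : deg b = h b x + count Q2 l.
  by rewrite -(count_spanning _ Hs) /= -{1}(unzip2_steps x s) count_map.
have Hl : size l = size s by rewrite size_steps.
have -> : count [pred p | ~~ h a p.1 && ~~ h b p.2] l = count (predC (predU Q1 Q2)) l.
  by apply: eq_count => p /=; rewrite negb_or.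
have -> : count [pred p | h a p.1 && h b p.2] l = count (predI Q1 Q2) l by [].
have := count_predUI Q1 Q2 l; have := count_predC (predU Q1 Q2) l.
by rewrite Ha Hb Hl; case: (h a _) (h b x) => [] []; lia.
Qed.

Definition gaps x s := count [pred p | ~~ h p.1 p.2] (steps x s).

Lemma gaps_eq0 x s : (gaps x s == 0) = path h x s.
Proof.
rewrite /gaps path_steps eqn0Ngt -has_count -all_predC.
by apply: eq_all => p /=; rewrite negbK.
Qed.

Lemma gaps_rev_mid x A b beta c gamma :
  h (last x A) (last b beta) -> h b c ->
  gaps x (A ++ rev (b :: beta) ++ c :: gamma) + ~~ h (last x A) b + ~~ h (last b beta) c
  = gaps x (A ++ (b :: beta) ++ c :: gamma).
Proof.
move=> hAb hbc; rewrite /gaps rev_cons_last !steps_cat /= steps_rev last_rev_belast.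
rewrite !count_cat /= !count_cat /= count_rev count_map hAb hbc h_sym /=.
rewrite (@eq_count _ _ [pred p | ~~ h p.1 p.2]) => [|[p q] /=]; last by rewrite h_sym.
lia.
Qed.

Lemma spanning_rev_mid x A B C : spanning (x :: A ++ rev B ++ C) = spanning (x :: A ++ B ++ C).
Proof. by apply: perm_spanning; rewrite perm_cons perm_cat2l perm_cat2r perm_rev. Qed.

(* Ore's count gives a step (p, p') with h a p and h b p' for a gap (a, b);
   reversing the segment between the two steps replaces the gap by (a, p) and
   (b, p'). *)
Lemma gaps_decrease u s : spanning (u :: s) -> 0 < gaps u s ->
  exists s', [/\ spanning (u :: s'), last u s' = last u s & gaps u s' < gaps u s].
Proof.
move=> Hs gaps_pos.
have /hasP [[a b] Hab /= nhab] : has [pred p | ~~ h p.1 p.2] (steps u s) by rewrite has_count.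
have ab : a != b by apply: (steps_neq (p := (a, b))) Hab; case/andP: Hs.
have gap_ab : 0 < count [pred p | ~~ h a p.1 && ~~ h b p.2] (steps u s).
  by rewrite -has_count; apply/hasP; exists (a, b); rewrite //= !h_irr.
have : 0 < count [pred p | h a p.1 && h b p.2] (steps u s).
  have := ore ab nhab; have := count_crossings a b Hs.
  case/andP: Hs => _ /eqP <-.
  by move: (h a (last u s)) (h b u) => [] [] /=; lia.
rewrite -has_count => /hasP [[p p'] Hpp /andP [/= hap hbp]].
have [s1 [s3 [Es /= Ea]]] := mem_stepsP Hab.
have last_mid A B c C : last u (A ++ rev B ++ c :: C) = last u (A ++ B ++ c :: C).
  by rewrite !last_cat.
rewrite Es steps_cat mem_cat Ea /= in_cons in Hpp.
case/or3P: Hpp => [Hpp|/eqP [Ep _]|Hpp].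
- have [t1 [t3 [Es1 /= Ep]]] := mem_stepsP Hpp.
  have Ea' : last p' t3 = a by rewrite -Ea Es1 last_cat Ep.
  have Es' : s = t1 ++ (p' :: t3) ++ b :: s3 by rewrite Es Es1 -catA.
  exists (t1 ++ rev (p' :: t3) ++ b :: s3).
  rewrite spanning_rev_mid last_mid -Es' Hs; split => //.
  have := @gaps_rev_mid u t1 p' t3 b s3; rewrite Ep Ea' -Es' h_sym hap h_sym hbp nhab.
  by move=> /(_ isT isT) <-; rewrite addn1 ltnS leq_addr.
- by move: hap; rewrite -Ep h_irr.
- have [t1 [t3 [Es3 /= Ep]]] := mem_stepsP Hpp.
  have Es' : s = s1 ++ (b :: t1) ++ p' :: t3 by rewrite Es Es3.
  exists (s1 ++ rev (b :: t1) ++ p' :: t3).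
  rewrite spanning_rev_mid last_mid -Es' Hs; split => //.
  have := @gaps_rev_mid u s1 b t1 p' t3; rewrite Ea Ep -Es' hap hbp nhab.
  by move=> /(_ isT isT) <-; rewrite /= -addnA add1n addnS ltnS leq_addr.
Qed.

Lemma hamiltonian_connected u v : u != v ->
  exists s, [/\ spanning (u :: s), last u s = v & path h u s].
Proof.
move=> uv; pose s0 := rcons [seq y <- enum V | (y != u) && (y != v)] v.
have Hs0 : spanning (u :: s0).
  have U0 : uniq (u :: s0).
    rewrite /= /s0 rcons_uniq mem_rcons !in_cons !mem_filter (negbTE uv) !eqxx /= !andbF /=.
    by rewrite filter_uniq ?enum_uniq.
  rewrite /spanning U0 -(card_uniqP U0) cardT; apply/eqP/eq_cardT => y.
  rewrite !inE /s0 mem_rcons !in_cons mem_filter mem_enum.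
  by case: (y =P u); case: (y =P v).
suff [s [Hs Hl /eqP]] : exists s, [/\ spanning (u :: s), last u s = v & gaps u s = 0].
  by rewrite gaps_eq0; exists s.
have : last u s0 = v by rewrite last_rcons.
elim: (gaps u s0).+1 {-2}s0 (ltnSn (gaps u s0)) Hs0 => // k IH s Hk Hs Hl.
have [g0|/(gaps_decrease Hs) [s' [Hs' Hl' Hlt]]] := posnP (gaps u s); first by exists s.
by apply: (IH s') => //; [lia | rewrite Hl'].
Qed.

Lemma hamiltonian_cycle_from x u : h x u -> exists s, spanning (x :: s) && cycle h (x :: s).
Proof.
move=> hxu; have xu : x != u by apply: contraTneq hxu => <-; rewrite h_irr.
have [s [Hs Hl Hp]] := hamiltonian_connected xu.
by exists s; rewrite Hs /= rcons_path Hp Hl h_sym.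
Qed.

Lemma reroute_path x a S w q t :
  spanning (x :: a :: S ++ w :: q :: t) -> path h x (a :: S ++ w :: q :: t) -> h x w ->
  [/\ spanning (last a S :: rev (belast a S) ++ [:: x, w, q & t]),
      path h (last a S) (rev (belast a S) ++ [:: x, w, q & t]) &
      {subset [:: (a, x); (x, w); (w, q)] <=
              steps (last a S) (rev (belast a S) ++ [:: x, w, q & t])}].
Proof.
move=> Hs Hp hxw; split.
- rewrite (perm_spanning (_ : perm_eq _ (x :: a :: S ++ w :: q :: t))) //.
  rewrite -cat_cons -rev_cons_last; apply/permP => z.
  by rewrite !count_cat /= count_cat count_rev /=; lia.
- move: Hp => /= /andP [hxa]; rewrite cat_path /= => /andP [HS /and3P [_ hwq Ht]].
  rewrite cat_path last_rev_belast /= h_sym hxa hxw hwq Ht rev_path !andbT.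
  by rewrite (eq_path (e' := h)) // => y z; rewrite h_sym.
move=> p; rewrite !inE => /or3P [] /eqP ->.
- by apply: (@mem_steps_cat V); rewrite last_rev_belast.
- rewrite -[[:: x, w, q & t]]/([:: x] ++ [:: w, q & t]) catA.
  by apply: (@mem_steps_cat V); rewrite last_cat.
- rewrite -[[:: x, w, q & t]]/([:: x; w] ++ q :: t) catA.
  by apply: (@mem_steps_cat V); rewrite last_cat.
Qed.

(* When the ends b and x of the path are not adjacent, Ore's count gives two
   steps (p, p') with h b p and h x p'; one of them is not m, and
   x .. p b .. p' x is a cycle. *)
Lemma ore_rotation x s m : spanning (x :: s) -> path h x s -> s != [::] ->
  exists t Y, [/\ s = t ++ Y, cycle h (x :: t ++ rev Y) &
                  (Y == [::]) || ((last x t, head x Y) != m)].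
Proof.
move=> Hs Hp s_n0; set b := last x s.
have [hbx|nhbx] := boolP (h b x).
  by exists s, [::]; rewrite cats0 /= rcons_path Hp hbx.
have xb : x != b.
  case/andP: Hs => /= /andP [Nx _] _; apply: contraNneq Nx => ->.
  by rewrite /b; case: (s) s_n0 => //= y t _; rewrite mem_last.
have := ore xb; rewrite h_sym => /(_ nhbx); have := count_crossings b x Hs.
rewrite -/b !h_irr /= !addn0 => crossings ore_bx.
have two_crossings : 1 < count [pred p | h b p.1 && h x p.2] (steps x s).
  by move: ore_bx; case/andP: Hs => _ /eqP <- /=; lia.
have /hasP [[p p'] ] : has (predC (pred1 m)) (filter [pred p | h b p.1 && h x p.2] (steps x s)).
  apply/hasPn => Hm; move: two_crossings; rewrite -size_filter; apply/negP; rewrite -leqNgt.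
  apply: (uniq_leq_size (s2 := [:: m])) => [|q /Hm]; last by rewrite /= negbK inE.
  by rewrite filter_uniq // uniq_steps //; case/andP: Hs => /andP [].
rewrite mem_filter => /andP [/andP [/= hbp hxp'] Hpp] pm.
have [t1 [t3 [Es /= Ep]]] := mem_stepsP Hpp.
exists t1, (p' :: t3); split => //; last by rewrite /= Ep.
have Eb : last p' t3 = b by rewrite /b Es last_cat Ep.
move: Hp; rewrite Es cat_path Ep /= => /andP [Hpt1 /andP [_ Hpt3]].
rewrite rev_cons_last Eb /= rcons_cat cat_path Hpt1 Ep /= rcons_path h_sym hbp /=.
have -> : last b (rev (belast p' t3)) = p' by rewrite -Eb last_rev_belast.
rewrite h_sym hxp' andbT -Eb rev_path.
by rewrite (eq_path (e' := h)) // => y z; rewrite h_sym.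
Qed.

Lemma ore_closing x s m : spanning (x :: s) -> path h x s -> s != [::] ->
  m \in steps x s ->
  exists W, [/\ spanning W, cycle h W, cycle_edge W m &
    {in steps x s &, forall p q, p != q -> cycle_edge W p || cycle_edge W q}].
Proof.
move=> Hs Hp s_n0 Hm; have [t [Y [Es Hc HY]]] := ore_rotation m Hs Hp s_n0.
have keep p : p \in steps x s -> (Y == [::]) || (p != (last x t, head x Y)) ->
    cycle_edge (x :: t ++ rev Y) p.
  by rewrite Es; apply: cycle_edge_rev_suffix; rewrite -Es; case/andP: Hs.
exists (x :: t ++ rev Y); split => //.
- by rewrite -[t ++ rev Y]cats0 -catA spanning_rev_mid catA cats0 -Es.
- by apply: keep; move: HY; case: (Y == [::]) => //=; rewrite eq_sym.
move=> p q Sp Sq pq; have [Y0|Yn0] := eqVneq Y [::]; first by rewrite !keep ?Y0.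
have [Ep|Np] := eqVneq p (last x t, head x Y); last by rewrite keep ?Np ?orbT.
by rewrite (keep q) ?orbT // -Ep [q == p]eq_sym pq orbT.
Qed.

End HamiltonianConnected.

Section CardSetD1.
Variable T : finType.
Implicit Types (A B : {set T}) (a : T).

Lemma card_gt1_neq A a : 1 < #|A| -> exists2 b, b \in A & b != a.
Proof.
case/card_gt1P => b1 [b2 [A1 A2 N]]; have [E|] := eqVneq b1 a; last by exists b1.
by exists b2; rewrite // -E eq_sym.
Qed.

Lemma card_setD1_gt1 A a : 2 < #|A| -> 1 < #|A :\ a|.
Proof. by rewrite (cardsD1 a A); case: (a \in A) => /=; lia. Qed.

Lemma card_setD1_gt1_neq A B : 1 < #|A| -> 1 < #|B| -> A != B ->
  exists2 a, a \in A & 1 < #|B :\ a|.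
Proof.
move=> A2 B2 AB; have [sAB|/subsetPn [a Aa Ba]] := boolP (A \subset B).
  have /proper_card AB' : A \proper B by rewrite properEneq AB sAB.
  have /card_gt0P [a Aa] : 0 < #|A| by apply: ltnW.
  exists a => //.
  by apply: card_setD1_gt1; apply: leq_trans AB'.
by exists a => //; move: B2; rewrite (cardsD1 a B) (negbTE Ba).
Qed.

End CardSetD1.

Section Colours.
Variables (V E : finType) (c : nat) (ends : E -> {set V}) (phi : E -> 'I_c).
Hypothesis ends2 : loopless ends.

Implicit Types (x y a b : V) (s t W : seq V).

Definition dym x y := [exists e1 in E_between ends x y, exists e2 in E_between ends x y,
  phi e1 != phi e2].

Hypothesis dym_ore : forall x y, x != y -> ~~ dym x y ->
  #|V|.+1 <= #|[set z | dym x z]| + #|[set z | dym y z]|.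

Definition colours x y : {set 'I_c} := phi @: E_between ends x y.

Lemma E_between_sym x y : E_between ends x y = E_between ends y x.
Proof. by apply/setP => e; rewrite !inE setUC. Qed.

Lemma E_between_id x : E_between ends x x = set0.
Proof.
apply/setP => e; rewrite !inE setUid; apply/negP => /eqP ends_e.
by have := ends2 e; rewrite ends_e cards1.
Qed.

Lemma colours_sym x y : colours x y = colours y x.
Proof. by rewrite /colours E_between_sym. Qed.

Lemma colours_id x : colours x x = set0.
Proof. by rewrite /colours E_between_id imset0. Qed.

Lemma coloursP x y k :
  reflect (exists2 e, e \in E_between ends x y & phi e = k) (k \in colours x y).
Proof. by apply: (iffP imsetP) => [[e He ->]|[e He <-]]; exists e. Qed.

Lemma dym_sym : symmetric dym.
Proof. by move=> x y; rewrite /dym E_between_sym. Qed.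

Lemma dym_irr : irreflexive dym.
Proof. by move=> x; apply/negbTE/existsP => -[e]; rewrite E_between_id inE. Qed.

Lemma dym_colours x y : dym x y -> 1 < #|colours x y|.
Proof.
case/exists_inP => e1 He1 /exists_inP [e2 He2 N].
by apply/card_gt1P; exists (phi e1), (phi e2); split => //; apply: imset_f.
Qed.

Lemma PC_of_colouring x s (k : nat -> 'I_c) : spanning (x :: s) ->
  (forall i, i < #|V| ->
     k i \in colours (nth x (x :: s) i) (nth x (x :: s) (i.+1 %% #|V|)) /\
     k i != k (i.+1 %% #|V|)) ->
  PC_hamiltonian_cycle ends phi.
Proof.
move=> /andP [Us /eqP Ss] Hk; have n_gt0 : 0 < #|V| by rewrite -Ss.
case/coloursP: (Hk 0 n_gt0).1 => e0 _ _.
pose v (i : 'I_#|V|) := nth x (x :: s) i.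
pose f (i : 'I_#|V|) := odflt e0 [pick e in E_between ends (v i) (v (ordS i)) | phi e == k i].
have Hf i : f i \in E_between ends (v i) (v (ordS i)) /\ phi (f i) = k i.
  rewrite /f; case: pickP => [e /andP [He /eqP ->] //|/= none].
  case/coloursP: (Hk i (ltn_ord i)).1 => e He Ee.
  by move: (none e); rewrite He Ee eqxx.
exists v, f; split => [i j /eqP|i|i]; first by rewrite nth_uniq ?Ss // => /eqP /val_inj.
  by case: (Hf i).
by rewrite (Hf i).2 (Hf (ordS i)).2 (Hk i (ltn_ord i)).2.
Qed.

Lemma greedy_colouring x s (A : {set 'I_c}) (k0 : 'I_c) :
  path dym x s -> s != [::] -> A \subset colours x (head x s) -> 1 < #|A| ->
  exists ks, [/\ size ks = size s, head k0 ks \in A &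
    forall i, i < size s ->
      nth k0 ks i \in colours (nth x (x :: s) i) (nth x s i) /\
      nth k0 ks i != nth k0 ks i.+1].
Proof.
elim: s x A => [|y s IH] x A //= /andP [dxy Hp] _ sA A2.
case: s IH Hp => [|y' s] IH Hp.
  have [k Ak kk0] := card_gt1_neq k0 A2.
  by exists [:: k]; split => // -[|i] //= _; split => //; apply: (subsetP sA).
have [ks [Sks Hks Cks]] := IH y (colours y y') Hp isT (subxx _) (dym_colours (proj1 (andP Hp))).
have [k Ak kks] := card_gt1_neq (head k0 ks) A2.
exists (k :: ks); split => //=; first by rewrite Sks.
case=> [|i] Hi /=; last by rewrite !(set_nth_default y) //=; [apply: Cks | apply: ltnW].
by split; [apply: (subsetP sA) | rewrite -nth0 in kks].
Qed.

Lemma PC_of_closing_colour x s k0 : spanning (x :: s) -> path dym x s ->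
  k0 \in colours (last x s) x -> 1 < #|colours x (head x s) :\ k0| ->
  PC_hamiltonian_cycle ends phi.
Proof.
move=> Hs Hp Hk0 A2.
have s_n0 : s != [::] by case: s {Hs Hp Hk0} A2 => //=; rewrite colours_id set0D cards0.
have [ks [Sks Hks Cks]] := greedy_colouring k0 Hp s_n0 (subsetDl _ _) A2.
(* The default [k0] of [nth k0 ks] colours the closing step. *)
apply: (PC_of_colouring (k := nth k0 ks) Hs) => i.
have -> : #|V| = (size s).+1 by case/andP: Hs => _ /eqP <-.
rewrite ltnS leq_eqVlt => /orP [/eqP ->|Hi].
  rewrite modnn nth_default ?Sks // nth0 -[nth x _ _]/(nth x (x :: s) (size (x :: s)).-1) nth_last.
  by split; rewrite // nth0 eq_sym; case/setD1P: Hks.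
by rewrite modn_small //=; apply: Cks.
Qed.

Lemma PC_of_dym_cycle_at W a k0 : spanning W -> cycle dym W ->
  k0 \in colours (prev W a) a -> 1 < #|colours a (next W a) :\ k0| ->
  PC_hamiltonian_cycle ends phi.
Proof.
move=> Hs Hc; have /andP [UW _] := Hs.
have /rot_to [i t Et] := mem_spanning a Hs.
have Ut : uniq (a :: t) by rewrite -Et rot_uniq.
rewrite -(prev_rot i UW) -(next_rot i UW) Et next_head prev_head; last by case/andP: Ut.
apply: PC_of_closing_colour; first by rewrite -Et /spanning rot_uniq size_rot.
by move: Hc; rewrite -(rot_cycle i) Et /= rcons_path => /andP [].
Qed.

Lemma PC_of_nonconstant_dym_cycle W a b : spanning W -> cycle dym W ->
  colours a (next W a) != colours b (next W b) -> PC_hamiltonian_cycle ends phi.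
Proof.
move=> Hs Hc Nab; have /andP [UW _] := Hs.
have [a' Na'] : exists a', colours (prev W a') a' != colours a' (next W a').
  apply/existsP; apply: contraNT Nab => /existsPn Eq; apply/eqP.
  apply: (prev_invariant_const (g := fun x => colours x (next W x)) UW);
    try exact: mem_spanning.
  by move=> x _ /=; rewrite next_prev //; apply/eqP/negbNE/Eq.
have Wa' := mem_spanning a' Hs.
have [k0 Hk0 A2] := card_setD1_gt1_neq
  (dym_colours (prev_cycle Hc Wa')) (dym_colours (next_cycle Hc Wa')) Na'.
exact: PC_of_dym_cycle_at Hk0 A2.
Qed.

Lemma cycle_edge_colours W p : cycle_edge W p ->
  exists b, colours b (next W b) = colours p.1 p.2.
Proof.
by case/orP => /eqP Ep; [exists p.1; rewrite Ep | exists p.2; rewrite Ep colours_sym].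
Qed.

Lemma PC_of_constant_dym_cycle_chord x s w L0 :
  spanning (x :: s) -> cycle dym (x :: s) ->
  (forall a, colours a (next (x :: s) a) = L0) -> dym x w -> colours x w != L0 ->
  PC_hamiltonian_cycle ends phi.
Proof.
move=> Hs Hc HL dxw Nw; have /andP [UW _] := Hs.
have ws : w \in s.
  by move: (mem_spanning w Hs); rewrite in_cons => /predU1P [Ew|//]; rewrite Ew dym_irr in dxw.
case/splitPr: ws Hs Hc HL UW => S [|q t] Hs Hc HL UW.
  have := HL (prev (x :: S ++ [:: w]) x); rewrite next_prev // prev_head; last by case/andP: UW.
  by rewrite last_cat /= colours_sym => Ew; move: Nw; rewrite Ew eqxx.
case: S Hs Hc HL UW => [|a S] Hs Hc HL UW.
  by move: (HL x); rewrite next_head => /= Ew; move: Nw; rewrite Ew eqxx.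
have Hp : path dym x (a :: S ++ [:: w, q & t]).
  by move: Hc; rewrite /= rcons_path => /and3P [-> ->].
have [HsP HpP sub] := reroute_path dym_sym Hs Hp dxw.
have Pn0 : rev (belast a S) ++ [:: x, w, q & t] != [::] by case: (rev _).
have [W' [HsW' HcW' Exw keep]] :=
  ore_closing dym_sym dym_irr dym_ore HsP HpP Pn0 (sub (x, w) ltac:(by rewrite !inE eqxx orbT)).
(* The steps (a, x) and (w, q) offer L0 and (x, w) does not; the new cycle
   keeps (x, w) and one of the other two. *)
have [b Eb] := cycle_edge_colours Exw.
have Nxq : (a, x) != (w, q).
  apply: contraTneq UW => -[_ ->]; rewrite /= negb_and negbK.
  by rewrite !(mem_cat, in_cons) eqxx !orbT.
have Wwq : next (x :: (a :: S) ++ [:: w, q & t]) w = q.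
  apply: (next_steps (p := (w, q))) => //.
  rewrite (_ : rcons _ x = (a :: S ++ [:: w]) ++ q :: rcons t x); last first.
    by rewrite rcons_cat /= -catA.
  by apply: (@mem_steps_cat V); rewrite /= last_cat.
have [b' Eb'] : exists b', colours b' (next W' b') = L0.
  case/orP: (keep _ _ (sub _ (mem_head _ _)) (sub (w, q) ltac:(by rewrite !inE eqxx !orbT)) Nxq).
    by case/cycle_edge_colours => b' Eb'; exists b'; rewrite Eb' /= colours_sym -(HL x) next_head.
  by case/cycle_edge_colours => b' Eb'; exists b'; rewrite Eb' /= -(HL w) Wwq.
by apply: (PC_of_nonconstant_dym_cycle HsW' HcW' (a := b) (b := b')); rewrite Eb Eb'.
Qed.

Lemma PC_of_constant_dym_cycle_rich x s L0 e :
  spanning (x :: s) -> cycle dym (x :: s) ->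
  (forall a, colours a (next (x :: s) a) = L0) -> x \in ends e -> phi e \notin L0 ->
  PC_hamiltonian_cycle ends phi.
Proof.
move=> Hs Hc HL xe Ne.
case: (pickP [pred w | dym x w && (colours x w != L0)]) => [w /andP [dxw Nw]|no_chord].
  exact: PC_of_constant_dym_cycle_chord Hs Hc HL dxw Nw.
have [y xy Ee] : exists2 y, x != y & ends e = [set x; y].
  have /eqP/cards2P [y1 [y2 [y12 Ee]]] := ends2 e.
  move: xe; rewrite Ee !inE => /orP [] /eqP ->; first by exists y2.
  by exists y1; rewrite 1?eq_sym // setUC.
have [s' [Hs' Hl' Hp']] := hamiltonian_connected dym_sym dym_irr dym_ore xy.
apply: (PC_of_closing_colour (k0 := phi e) Hs' Hp').
  by rewrite Hl' colours_sym; apply/coloursP; exists e; rewrite // inE Ee.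
have dxh : dym x (head x s').
  by case: s' Hs' Hl' Hp' => [/= _ Exy|z t _ _ /andP []] //; rewrite Exy eqxx in xy.
move: (no_chord (head x s')) (dym_colours dxh); rewrite /= dxh /= => /negbFE/eqP ->.
by rewrite (cardsD1 (phi e) L0) (negbTE Ne).
Qed.

Lemma PC_of_dym_cycle_three_colours x s : spanning (x :: s) -> cycle dym (x :: s) ->
  three_colors_at ends phi x -> PC_hamiltonian_cycle ends phi.
Proof.
set W := x :: s => Hs Hc [e1 [e2 [e3 [x1 x2 x3 /and3P [N12 N13 N23]]]]].
have [/existsP [a /existsP [b Nab]]|/existsPn const] :=
  boolP [exists a, exists b, colours a (next W a) != colours b (next W b)].
  exact: PC_of_nonconstant_dym_cycle Hs Hc Nab.
set L0 := colours x (next W x).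
have HL a : colours a (next W a) = L0 by apply/eqP; move/existsPn/(_ x): (const a); rewrite negbK.
have [/subsetP sub3|/subsetPn [k]] := boolP ([set phi e1; phi e2; phi e3] \subset L0).
  have /andP [UW _] := Hs.
  apply: (PC_of_dym_cycle_at (a := x) (k0 := phi e1) Hs Hc).
    by rewrite -[x in colours _ x](next_prev UW x) HL sub3 // !inE eqxx.
  apply: card_setD1_gt1; apply/card_gt2P; exists (phi e1), (phi e2), (phi e3).
  by split; [split; apply: sub3; rewrite !inE eqxx ?orbT | split; rewrite // eq_sym].
rewrite !inE => /orP [/orP []|] /eqP -> Nk.
- exact: PC_of_constant_dym_cycle_rich Hs Hc HL x1 Nk.
- exact: PC_of_constant_dym_cycle_rich Hs Hc HL x2 Nk.
- exact: PC_of_constant_dym_cycle_rich Hs Hc HL x3 Nk.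
Qed.

End Colours.

Theorem mainTheorem11 (V E : finType) (c : nat) (ends : E -> {set V})
    (phi : E -> 'I_c) :
  loopless ends ->
  (forall x : V, two_colors_at ends phi x) ->
  (forall x : V, #|V|.+1 <= 2 * delta_dym ends phi x) ->
  (exists x : V, three_colors_at ends phi x) ->
  PC_hamiltonian_cycle ends phi.
Proof.
(* [two_colors_at] is implied by the degree condition. *)
move=> ends2 _ deg_dym [x rich_x].
have deg a : #|V|.+1 <= 2 * #|[set z | dym ends phi a z]| by apply: deg_dym.
have dym_ore a b : a != b -> ~~ dym ends phi a b ->
    #|V|.+1 <= #|[set z | dym ends phi a z]| + #|[set z | dym ends phi b z]|.
  by move=> _ _; move: (deg a) (deg b); lia.
have /card_gt0P [u] : 0 < #|[set z | dym ends phi x z]| by move: (deg x); lia.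
rewrite inE => /(hamiltonian_cycle_from (dym_sym ends phi) (dym_irr phi ends2) dym_ore).
case=> s /andP [Hs Hc].
exact: PC_of_dym_cycle_three_colours ends2 dym_ore _ _ Hs Hc rich_x.
Qed.
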